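(* Fix an integer $k\ge -1$. For every $g\ge 4k+3$, \[\#\{S\in\mathcal{S}_g\mid m(S)=g-k\}=\sum_{\overline{x}\in\mathcal{Y}(k)}\binom{g-3k-2}{k+1-a(\overline{x})-2b(\overline{x})}.\]
   Context: A numerical semigroup $S$ is a submonoid of $\mathbb{N}_0$ with finite complement; its genus is the size of the complement and $m(S)$ is its smallest nonzero element. $\mathcal{S}_g$ is the set of numerical semigroups of genus $g$. For $\overline{x}=(x_1,\ldots,x_t)\in\{1,2,3\}^t$ let $a(\overline{x})=\#\{i: x_i=2\}$ and $b(\overline{x})=\#\{i: x_i=3\}$. For an integer $k\ge 0$, $\mathcal{Y}(k)$ is the set of tuples $\overline{x}=(x_1,\ldots,x_{2k+1})\in\{1,2,3\}^{2k+1}$ such that (i) whenever $i_1,i_2,i_3\in[1,2k+1]$ satisfy $i_1+i_2=i_3$, $(x_{i_1},x_{i_2},x_{i_3})\ne(1,1,3)$, and (ii) $a(\overline{x})+2b(\overline{x})\le k+1$; and $\mathcal{Y}(-1)=\{\emptyset\}$ consists of the empty tuple (with $a=b=0$). *)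

From mathcomp Require Import all_boot all_order all_algebra.
From mathcomp Require Import finmap.
Set Implicit Arguments. Unset Strict Implicit. Unset Printing Implicit Defensive.
Import Order.TTheory GRing.Theory Num.Theory.


(* A numerical semigroup S is encoded by its (finite) set of gaps G = N0 \ S.
   S = complement of G is a submonoid of N0 iff 0 \notin G and the complement
   is closed under addition. *)
Definition is_ns_gaps (G : {fset nat}) : Prop :=
  (0 \notin G) /\ (forall a b : nat, a \notin G -> b \notin G -> (a + b)%N \notin G).

Definition genus (G : {fset nat}) : nat := #|` G|%fset.

Definition multiplicity_is (G : {fset nat}) (m : nat) : Prop :=
  [/\ (0 < m)%N, m \notin G & forall j : nat, (0 < j < m)%N -> j \in G].

Fixpoint allseq (n : nat) : seq (seq nat) :=
  match n with
  | 0 => [:: [::]]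
  | n'.+1 => [seq v :: s | v <- [:: 1; 2; 3]%N, s <- allseq n']
  end.

(* 1-based access x_i *)
Definition xat (x : seq nat) (i : nat) : nat := nth 0%N x i.-1.

Definition a_of (x : seq nat) : nat := count (pred1 2%N) x.
Definition b_of (x : seq nat) : nat := count (pred1 3%N) x.

Definition cond_i (x : seq nat) : bool :=
  all (fun i1 => all (fun i2 => all (fun i3 =>
      (i1 + i2 == i3) ==>
      ~~ [&& xat x i1 == 1%N, xat x i2 == 1%N & xat x i3 == 3%N])
    (iota 1 (size x))) (iota 1 (size x))) (iota 1 (size x)).

Definition cond_ii (k : int) (x : seq nat) : bool :=
  ((a_of x + 2 * b_of x)%:Z <= k + 1)%R.

Definition Y (k : int) : seq (seq nat) :=
  match k with
  | Posz k' => [seq x <- allseq (2 * k').+1 | cond_i x && cond_ii k x]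
  | Negz _ => [:: [::]]
  end.

From mathcomp Require Import all_boot all_order all_algebra.
From mathcomp Require Import finmap zify.
Import Order.TTheory GRing.Theory Num.Theory.
Set Implicit Arguments. Unset Strict Implicit. Unset Printing Implicit Defensive.

(* Let S have multiplicity m and genus g, so that S has K = g + 1 - m = k + 1 gaps
   above m, and m >= 3K.  For 0 < i < m let the level of i be the q such that q m + i
   is the least element of S congruent to i mod m (its Kunz coordinate).  Pairing i
   with c - i shows that a gap 2m + c forces c + 3 <= 2K, and pairing i with m + c - i
   that there is no gap 3m + c, hence no gap above 3m.  So all levels are at most 3, a
   level 3 only occurs among the first 2K - 1 positions, and S is determined by its
   level sequence.  Closure of S under addition says exactly that two levels 1 never
   add up to a level 3, and the number of gaps above m is the weight a + 2b of the
   sequence.  So the level sequences are the concatenations of a prefix x in Y(k) with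
   a word of length m - 2K over {1, 2} containing K - a(x) - 2b(x) letters 2. *)

Definition in123 (v : nat) : bool := 0 < v <= 3.
Definition in12 (v : nat) : bool := 0 < v <= 2.
Definition weight (x : seq nat) : nat := a_of x + 2 * b_of x.

Lemma weight_cat x y : weight (x ++ y) = weight x + weight y.
Proof. rewrite /weight /a_of /b_of !count_cat; lia. Qed.

Lemma weight_in123 t : all in123 t -> weight t = count (leq 2) t + count (leq 3) t.
Proof.
rewrite /weight /a_of /b_of; elim: t => //= v t IH /andP[hv /IH e].
move: e hv; rewrite /in123; case: v => [|[|[|[|v]]]] //= e _; lia.
Qed.

Lemma b_of_in12 y : all in12 y -> b_of y = 0.
Proof.
rewrite /b_of; elim: y => //= v y IH /andP[hv /IH ->].
by move: hv; rewrite /in12; case: v => [|[|[|v]]].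
Qed.

Lemma xat_catl x y i : 0 < i <= size x -> xat (x ++ y) i = xat x i.
Proof. by move=> hi; rewrite /xat nth_cat ifT //; lia. Qed.

Lemma xat_catr x y i : size x < i -> xat (x ++ y) i = xat y (i - size x).
Proof. by move=> hi; rewrite /xat nth_cat ifF; [congr nth | ]; lia. Qed.

Lemma xat_take n t i : 0 < i <= n -> xat (take n t) i = xat t i.
Proof. by move=> hi; rewrite /xat nth_take //; lia. Qed.

Lemma xat_drop n t i : 0 < i -> xat (drop n t) i = xat t (n + i).
Proof. by move=> i_gt0; rewrite /xat nth_drop; congr nth; lia. Qed.

Lemma all_xatP (P : pred nat) t :
  reflect (forall i, 0 < i <= size t -> P (xat t i)) (all P t).
Proof.
apply: (iffP (all_nthP 0)) => [h i hi | h i hi].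
  by apply: h; lia.
by have := h i.+1 ltac:(lia).
Qed.

Lemma map_xat_iota t : map (xat t) (iota 1 (size t)) = t.
Proof.
rewrite -[1]addn0 iotaDl -map_comp -[RHS](mkseq_nth 0).
by apply: eq_map => i /=; rewrite /xat add1n.
Qed.

Lemma cond_iP x :
  reflect (forall i i', 0 < i -> 0 < i' -> i + i' <= size x ->
             ~~ [&& xat x i == 1, xat x i' == 1 & xat x (i + i') == 3])
          (cond_i x).
Proof.
apply: (iffP allP) => [h i i' i0 i'0 hs | h i1].
  have /allP/(_ i') := h i ltac:(rewrite mem_iota; lia).
  move=> /(_ ltac:(rewrite mem_iota; lia)) /allP /(_ (i + i')).
  rewrite mem_iota eqxx => /(_ _)/implyP; apply; lia.
rewrite mem_iota => h1; apply/allP => i2; rewrite mem_iota => h2.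
apply/allP => i3; rewrite mem_iota => h3; apply/implyP => /eqP e; subst i3.
by apply: h; lia.
Qed.

Lemma mem_allseq n x : (x \in allseq n) = (size x == n) && all in123 x.
Proof.
elim: n x => [|n IH] [|v x] //; first by apply/negP => /allpairsP[[a b] /= [_ _]].
apply/allpairsP/idP => [[[a y] /= [ha hy [-> ->]]]|/andP[sx /andP[hv ax]]].
  move: hy; rewrite IH /= eqSS => /andP[-> ->]; rewrite andbT.
  by move: ha; rewrite !inE => /or3P[]/eqP->.
rewrite /= eqSS in sx.
exists (v, x) => /=; split => //; last by rewrite IH sx.
by move: hv; rewrite /in123 !inE; case: v => [|[|[|[|v]]]].
Qed.

Lemma allseq_uniq n : uniq (allseq n).
Proof.
elim: n => // n IH; apply: allpairs_uniq => //.
by move=> [a b] [c d] _ _ /= [-> ->].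
Qed.

Fixpoint words12 (n j : nat) : seq (seq nat) :=
  match n with
  | 0 => if j is 0 then [:: [::]] else [::]
  | n'.+1 => map (cons 1) (words12 n' j) ++
             (if j is j'.+1 then map (cons 2) (words12 n' j') else [::])
  end.

Lemma size_words12 n j : size (words12 n j) = 'C(n, j).
Proof.
elim: n j => [|n IH] [|j] //=; rewrite size_cat !size_map ?IH //=.
by rewrite !bin0.
Qed.

Lemma mem_words12 n j y :
  (y \in words12 n j) = [&& size y == n, all in12 y & a_of y == j].
Proof.
elim: n j y => [|n IH] j [|v y] /=; try by case: j.
  by rewrite mem_cat; apply/negP => /orP[/mapP[] // | ]; case: j => // j /mapP[].
rewrite mem_cat eqSS.
apply/orP/idP => [[/mapP[z hz [-> ->]]|]|].
- by move: hz; rewrite IH.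
- case: j => // j /mapP[z hz [-> ->]].
  by move: hz; rewrite IH => /and3P[-> -> /eqP ->]; rewrite /in12 /= add1n.
case/and3P => sy /andP[hv ay] cy.
move: hv; rewrite /in12; case: v cy => [|[|[|v]]] //= cy _.
  by left; apply/mapP; exists y => //; rewrite IH sy ay.
right; case: j cy => // j cy; apply/mapP; exists y => //.
by rewrite IH sy ay; rewrite add1n eqSS in cy.
Qed.

Lemma words12_uniq n j : uniq (words12 n j).
Proof.
have cons_inj v : injective (cons v : seq nat -> seq nat) by move=> a b [].
elim: n j => [|n IH] [|j] //=; first by rewrite cats0 map_inj_uniq.
rewrite cat_uniq !map_inj_uniq ?IH //= andbT.
by apply/hasPn => z /mapP[a _ ->]; apply/negP => /mapP[].
Qed.

Lemma count_iota_mirror (p : pred nat) lo len :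
  (forall i, lo <= i < lo + len -> p i || p (2 * lo + len - 1 - i)) ->
  len <= 2 * count p (iota lo len).
Proof.
set mirror := fun i => 2 * lo + len - 1 - i => hp.
have mirror_rev : map mirror (iota lo len) = rev (iota lo len).
  apply: (@eq_from_nth _ 0) => [|i]; rewrite size_map ?size_rev // size_iota => hi.
  rewrite nth_rev ?size_iota // (nth_map 0) ?size_iota // !nth_iota /mirror //; lia.
have count_mirror : count (preim mirror p) (iota lo len) = count p (iota lo len).
  by rewrite -count_map mirror_rev count_rev.
have count_pairs : count (predU p (preim mirror p)) (iota lo len) = len.
  rewrite -[RHS](size_iota lo len) -count_predT.
  by apply: eq_in_count => i; rewrite mem_iota => /hp.
have := count_predUI p (preim mirror p) (iota lo len); lia.
Qed.

Lemma count_iota_split (p : pred nat) n c : 0 < c <= n ->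
  count p (iota 1 n) = count p (iota 1 c.-1) + p c + count p (iota c.+1 (n - c)).
Proof.
move=> hc; rewrite (_ : n = c.-1 + (n - c).+1); last lia.
rewrite iotaD count_cat (_ : 1 + c.-1 = c); last lia.
by rewrite /= addnA (_ : c.-1 + (n - c).+1 - c = n - c); last lia.
Qed.

Section LevelEncoding.
Variable m : nat.

Definition level_gap (t : seq nat) (j : nat) : bool :=
  [|| 0 < j < m, (m < j < 2 * m) && (2 <= xat t (j - m))
    | (2 * m < j < 3 * m) && (3 <= xat t (j - 2 * m))].

Definition gaps_of (t : seq nat) : {fset nat} :=
  [fset j in filter (level_gap t) (iota 0 (3 * m))]%fset.

Definition level_seq (t : seq nat) : Prop := size t = m.-1 /\ all in123 t.

Definition level_closed (t : seq nat) : Prop :=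
  forall i i', 0 < i -> 0 < i' -> i + i' < m ->
    xat t i <= 1 -> xat t i' <= 1 -> xat t (i + i') <= 2.

Definition level (G : {fset nat}) (i : nat) : nat :=
  if m + i \in G then (if 2 * m + i \in G then 3 else 2) else 1.

Definition levels (G : {fset nat}) : seq nat := mkseq (fun i => level G i.+1) m.-1.

Lemma mem_gaps_of t j : (j \in gaps_of t) = level_gap t j.
Proof.
rewrite /gaps_of inE mem_filter mem_iota /=.
by case: (boolP (level_gap t j)) => //= /or3P[]; lia.
Qed.

Lemma card_gaps_of t : 0 < m -> level_seq t -> #|` gaps_of t| = m.-1 + weight t.
Proof.
move=> m_gt0 [size_t t123].
have iota_m : iota 0 m = 0 :: iota 1 m.-1 by rewrite -(prednK m_gt0).
have block c (P : pred nat) : level_gap t c = false ->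
    (forall i, 0 < i < m -> level_gap t (c + i) = P (xat t i)) ->
    count (level_gap t) (iota c m) = count P t.
  move=> gap_c gap_ci; rewrite -[c]addn0 iotaDl count_map iota_m /= addn0 gap_c.
  rewrite -{2}(map_xat_iota t) count_map size_t add0n.
  by apply: eq_in_count => i; rewrite mem_iota => hi; apply: gap_ci; lia.
have low : count (level_gap t) (iota 0 m) = m.-1.
  by rewrite (block 0 predT) ?count_predT ?size_t // => i hi; rewrite add0n /level_gap /=; lia.
have mid : count (level_gap t) (iota m m) = count (leq 2) t.
  by apply: block => [|i hi]; rewrite /level_gap ?addKn; lia.
have high : count (level_gap t) (iota (2 * m) m) = count (leq 3) t.
  by apply: block => [|i hi]; rewrite /level_gap ?addKn; lia.
rewrite weight_in123 // /gaps_of card_fseq undup_id ?filter_uniq ?iota_uniq //.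
rewrite size_filter (_ : 3 * m = m + m + m); last lia.
by rewrite !iotaD !count_cat !add0n addnn -mul2n low mid high addnA.
Qed.

Lemma gaps_of_ns t : level_closed t -> is_ns_gaps (gaps_of t).
Proof.
move=> closed; split=> [|a b]; rewrite !mem_gaps_of /level_gap; first lia.
move=> a_ng b_ng.
have [->|a_gt0] := posnP a; first by rewrite add0n.
have [->|b_gt0] := posnP b; first by rewrite addn0.
have [|ab_lt3m] := leqP (3 * m) (a + b); first lia.
have [i a_eq] : exists i, a = m + i by exists (a - m); lia.
have [i' b_eq] : exists i', b = m + i' by exists (b - m); lia.
subst a b; rewrite !addKn (_ : m + i + (m + i') - 2 * m = i + i') in a_ng b_ng *; last lia.
have [i0|i_gt0] := posnP i; first by subst i; rewrite add0n; lia.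
have [i'0|i'_gt0] := posnP i'; first by subst i'; rewrite !addn0; lia.
have := closed i i' i_gt0 i'_gt0; lia.
Qed.

Lemma gaps_of_mult t : 0 < m -> multiplicity_is (gaps_of t) m.
Proof.
by move=> m_gt0; split=> // [|j hj]; rewrite mem_gaps_of /level_gap; lia.
Qed.

Lemma xat_levels G i : 0 < i < m -> xat (levels G) i = level G i.
Proof. by move=> hi; rewrite /xat nth_mkseq prednK //; lia. Qed.

Lemma levels_gaps_of t : level_seq t -> levels (gaps_of t) = t.
Proof.
case=> size_t t123; apply: (@eq_from_nth _ 0) => [|i]; rewrite size_mkseq ?size_t //.
move=> hi; rewrite nth_mkseq // /level !mem_gaps_of.
have -> : level_gap t (m + i.+1) = (2 <= xat t i.+1) by rewrite /level_gap addKn; lia.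
have -> : level_gap t (2 * m + i.+1) = (3 <= xat t i.+1) by rewrite /level_gap addKn; lia.
have : in123 (xat t i.+1) by apply/(all_xatP _ _ t123); lia.
by change (nth 0 t i) with (xat t i.+1); case: (xat t i.+1) => [|[|[|[|v]]]].
Qed.

Lemma gaps_of_inj t1 t2 : level_seq t1 -> level_seq t2 -> gaps_of t1 = gaps_of t2 -> t1 = t2.
Proof. by move=> t1_lev t2_lev e; rewrite -(levels_gaps_of t1_lev) e levels_gaps_of. Qed.

End LevelEncoding.

Section LevelDecoding.
Variables (m K : nat) (G : {fset nat}).
Hypotheses (m_gt0 : 0 < m) (G_ns : is_ns_gaps G) (G_card : #|` G| = m.-1 + K)
  (G_mult : multiplicity_is G m) (m_ge3K : 3 * K <= m).

Lemma mult_notin : m \notin G.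
Proof. by case: G_mult. Qed.

Lemma lt_mult_in j : 0 < j < m -> j \in G.
Proof. by case: G_mult => _ _; apply. Qed.

Lemma double_mult_notin : 2 * m \notin G.
Proof. by rewrite mul2n -addnn; apply: G_ns.2; apply: mult_notin. Qed.

Lemma gap_sub_mult j : j \in G -> m <= j -> j - m \in G.
Proof.
move=> jG le_mj; apply: contraLR jG => /G_ns.2 /(_ mult_notin).
by rewrite subnK.
Qed.

Lemma gap_pair i i' : 2 * m + (i + i') \in G -> (m + i \in G) || (m + i' \in G).
Proof.
apply: contraLR => /norP[/G_ns.2 gap_sum /gap_sum].
by rewrite (_ : m + i + (m + i') = 2 * m + (i + i')); last lia.
Qed.

Lemma count_mid_gaps_lt e : e \in G -> 2 * m <= e ->
  count (fun i => m + i \in G) (iota 1 m.-1) < K.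
Proof.
move=> eG le_2m_e.
pose l := iota 1 m.-1 ++ [seq m + i | i <- iota 1 m.-1 & m + i \in G] ++ [:: e].
have l_uniq : uniq l.
  rewrite /l !cat_uniq iota_uniq (map_inj_uniq (@addnI m)) filter_uniq ?iota_uniq //=.
  rewrite orbF !andbT; apply/andP; split.
    apply/hasPn => x; rewrite mem_cat inE => /orP[/mapP[i]|/eqP->]; rewrite mem_iota.
      by rewrite mem_filter mem_iota => /andP[_ hi] ->; lia.
    by lia.
  by apply/negP => /mapP[i]; rewrite mem_filter mem_iota => /andP[_ hi]; lia.
have l_sub : {subset l <= G}.
  move=> x; rewrite /l !mem_cat inE => /or3P[|/mapP[i]|/eqP->] //.
    by rewrite mem_iota => hx; apply: lt_mult_in; lia.
  by rewrite mem_filter => /andP[? _] ->.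
have := uniq_leq_size l_uniq l_sub.
by rewrite /l !size_cat size_map size_filter size_iota /= G_card; lia.
Qed.

Lemma double_K_lower_bound c : 0 < c < m -> 2 * m + c \in G ->
  c.-1 + 2 * count (fun i => m + i \in G) (iota c.+1 (m.-1 - c)) + 4 <= 2 * K.
Proof.
move=> hc gap_c; set p := fun i => m + i \in G.
have mid_c : p c.
  have := gap_sub_mult gap_c; rewrite (_ : 2 * m + c - m = m + c); [apply; lia | lia].
have low_pairs : c.-1 <= 2 * count p (iota 1 c.-1).
  apply: count_iota_mirror => i hi; apply: gap_pair.
  by rewrite (_ : i + (2 * 1 + c.-1 - 1 - i) = c) //; lia.
have := count_mid_gaps_lt gap_c (leq_addr _ _).
rewrite (@count_iota_split p m.-1 c) ?mid_c /=; lia.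
Qed.

Lemma level3_bound i : 0 < i < m -> 2 * m + i \in G -> i + 3 <= 2 * K.
Proof. by move=> hi /(double_K_lower_bound hi); lia. Qed.

Lemma reduce_gap_ge3m j : j \in G -> 3 * m <= j -> exists2 c, c < m & 3 * m + c \in G.
Proof.
elim/ltn_ind: j => j IH jG le_3m_j.
have [lt_j_4m|le_4m_j] := ltnP j (4 * m).
  by exists (j - 3 * m); [lia | rewrite subnKC].
have gap_jm : j - m \in G by apply: gap_sub_mult => //; lia.
by apply: (IH (j - m)) => //; lia.
Qed.

Lemma gap_lt_3m j : j \in G -> j < 3 * m.
Proof.
move=> jG; rewrite ltnNge; apply/negP => /(reduce_gap_ge3m jG)[c lt_cm gap_c].
have [c0|c_gt0] := posnP c.
  move: gap_c; rewrite c0 addn0 (_ : 3 * m = 2 * m + m); last lia.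
  by rewrite (negPf (G_ns.2 _ _ double_mult_notin mult_notin)).
have gap_2c : 2 * m + c \in G.
  have := gap_sub_mult gap_c; rewrite (_ : 3 * m + c - m = 2 * m + c); [apply; lia | lia].
have high_pairs :
    m.-1 - c <= 2 * count (fun i => m + i \in G) (iota c.+1 (m.-1 - c)).
  apply: count_iota_mirror => i hi; apply: gap_pair.
  by rewrite (_ : 2 * m + (i + (2 * c.+1 + (m.-1 - c) - 1 - i)) = 3 * m + c) //; lia.
have := @double_K_lower_bound c ltac:(lia) gap_2c; lia.
Qed.

Lemma level_ge2 i : (2 <= level m G i) = (m + i \in G).
Proof. by rewrite /level; case: (m + i \in G); case: (_ \in G). Qed.

Lemma level_ge3 i : (3 <= level m G i) = (2 * m + i \in G).
Proof.
rewrite /level; case gap_2i: (2 * m + i \in G); last by case: (_ \in G).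
have := gap_sub_mult gap_2i; rewrite (_ : 2 * m + i - m = m + i); last lia.
by move=> /(_ ltac:(lia)) ->.
Qed.

Lemma levels_level_seq : level_seq m (levels m G).
Proof.
split; first by rewrite size_mkseq.
by apply/allP => v /mapP[i _ ->]; rewrite /level; case: (_ \in G); case: (_ \in G).
Qed.

Lemma gaps_of_levels : gaps_of m (levels m G) = G.
Proof.
apply/fsetP => j; rewrite mem_gaps_of /level_gap.
have mid i : 0 < i < m -> (2 <= xat (levels m G) i) = (m + i \in G).
  by move=> hi; rewrite xat_levels ?level_ge2.
have high i : 0 < i < m -> (3 <= xat (levels m G) i) = (2 * m + i \in G).
  by move=> hi; rewrite xat_levels ?level_ge3.
apply/idP/idP => [/or3P[low | /andP[hj] | /andP[hj]] | jG].
- exact: lt_mult_in.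
- by rewrite mid ?subnKC //; lia.
- by rewrite high ?subnKC //; lia.
have ne_j0 : j != 0 by apply: contraTneq jG => ->; apply: G_ns.1.
have ne_jm : j != m by apply: contraTneq jG => ->; apply: mult_notin.
have ne_j2m : j != 2 * m by apply: contraTneq jG => ->; apply: double_mult_notin.
have := gap_lt_3m jG; case: (ltnP j m) => [lt_jm | le_mj] lt_j3m; first lia.
case: (ltnP j (2 * m)) => [lt_j2m | le_2mj].
  by rewrite mid ?subnKC ?jG; lia.
by rewrite high ?subnKC ?jG; lia.
Qed.

Lemma weight_levels : weight (levels m G) = K.
Proof.
have := card_gaps_of m_gt0 levels_level_seq.
by rewrite gaps_of_levels G_card; lia.
Qed.

Lemma levels_closed : level_closed m (levels m G).
Proof.
move=> i i' i_gt0 i'_gt0 lt_sum_m.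
have le1 n : 0 < n < m -> (xat (levels m G) n <= 1) = (m + n \notin G).
  by move=> hn; rewrite xat_levels // leqNgt level_ge2.
have hi : 0 < i < m by lia.
have hi' : 0 < i' < m by lia.
have hii' : 0 < i + i' < m by lia.
rewrite (le1 _ hi) (le1 _ hi') (xat_levels _ hii') leqNgt level_ge3 => i_ng i'_ng.
have := G_ns.2 _ _ i_ng i'_ng.
by rewrite (_ : m + i + (m + i') = 2 * m + (i + i')); last lia.
Qed.

Lemma levels_tail12 : all in12 (drop (2 * K).-1 (levels m G)).
Proof.
apply/all_xatP => i; rewrite size_drop size_mkseq => hi.
have hKi : 0 < (2 * K).-1 + i < m by lia.
have := all_xatP _ _ levels_level_seq.2 ((2 * K).-1 + i) ltac:(rewrite size_mkseq; lia).
rewrite xat_drop; last lia.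
have := level3_bound hKi; rewrite (xat_levels _ hKi) -level_ge3 /in12 /in123; lia.
Qed.

End LevelDecoding.

Lemma allpairs_cat_uniq (T : eqType) (xs : seq (seq T)) (f : seq T -> seq (seq T)) n :
  uniq xs -> {in xs, forall x, size x = n} -> (forall x, uniq (f x)) ->
  uniq [seq x ++ y | x <- xs, y <- f x].
Proof.
elim: xs => //= x xs IH /andP[x_notin xs_uniq] xs_size f_uniq.
have size_x : size x = n by apply: xs_size; rewrite inE eqxx.
rewrite cat_uniq IH ?andbT //; last by move=> z z_in; apply: xs_size; rewrite inE z_in orbT.
rewrite map_inj_uniq ?f_uniq /=; last first.
  by move=> y y' /eqP; rewrite eqseq_cat // => /andP[_ /eqP].
apply/hasPn => z /allpairsPdep[x' [y' [x'_in _ ->]]]; apply/negP => /mapP[y _ /eqP].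
rewrite eqseq_cat; last by rewrite size_x xs_size // inE x'_in orbT.
by case/andP => /eqP eq_x _; move: x_notin; rewrite -eq_x x'_in.
Qed.

Definition Ynat (K : nat) : seq (seq nat) :=
  [seq x <- allseq (2 * K).-1 | cond_i x && (weight x <= K)].

Lemma Y_Ynat (K : nat) : Y (K%:Z - 1) = Ynat K.
Proof.
case: K => [|K] //; rewrite /Y /Ynat (_ : K.+1%:Z - 1 = K)%R; last lia.
rewrite (_ : (2 * K.+1).-1 = (2 * K).+1); last lia.
by apply: eq_filter => x; rewrite /cond_ii /weight; congr andb; lia.
Qed.

Definition level_seqs (m K : nat) : seq (seq nat) :=
  [seq x ++ y | x <- Ynat K, y <- words12 (m.-1 - (2 * K).-1) (K - weight x)].

Lemma mem_level_seqs m K t : 2 * K <= m ->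
  t \in level_seqs m K <->
  [/\ level_seq m t, level_closed m t, weight t = K & all in12 (drop (2 * K).-1 t)].
Proof.
move=> le_2K_m; split.
  case/allpairsPdep => [x [y [x_in y_in ->]]].
  move: x_in; rewrite mem_filter mem_allseq.
  case/andP => /andP[x_cond x_weight] /andP[/eqP x_size x123].
  move: y_in; rewrite mem_words12 => /and3P[/eqP y_size y12 /eqP y_a].
  have y123 : all in123 y by apply: sub_all y12 => v; rewrite /in12 /in123; lia.
  split.
  - by split; [rewrite size_cat x_size y_size; lia | rewrite all_cat x123 y123].
  - move=> i i' i_gt0 i'_gt0 lt_sum_m.
    have [le_sum_x | lt_x_sum] := leqP (i + i') (size x).
      have in_x k : 0 < k <= size x -> xat (x ++ y) k = xat x k /\ in123 (xat x k).
        by move=> hk; rewrite xat_catl //; split=> //; apply/all_xatP.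
      have [-> x_i] := in_x i ltac:(lia).
      have [-> x_i'] := in_x i' ltac:(lia).
      have [-> x_ii'] := in_x (i + i') ltac:(lia).
      have := elimT (cond_iP x) x_cond i i' i_gt0 i'_gt0 le_sum_x.
      by move: x_i x_i' x_ii'; rewrite /in123; lia.
    move=> _ _; rewrite xat_catr //; apply/(all_xatP (fun v => v <= 2)).
      by apply: sub_all y12 => v; rewrite /in12; lia.
    by rewrite y_size x_size; lia.
  - by rewrite weight_cat {2}/weight (b_of_in12 y12) y_a; lia.
  - by rewrite drop_size_cat.
case=> [[t_size t123] t_closed t_weight tail12].
set n := (2 * K).-1; have n_le : n <= size t by rewrite t_size; lia.
have weight_split : weight (take n t) + a_of (drop n t) = K.
  rewrite -t_weight -{3}(cat_take_drop n t) weight_cat.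
  by rewrite [weight (drop _ _)]/weight b_of_in12 ?muln0 ?addn0.
rewrite -(cat_take_drop n t); apply: allpairs_f_dep.
  rewrite mem_filter mem_allseq size_takel // eqxx /=.
  apply/andP; split; last by apply/allP => v /mem_take /(allP t123).
  apply/andP; split; last by rewrite -weight_split leq_addr.
  apply/cond_iP => i i' i_gt0 i'_gt0; rewrite size_takel // => le_sum_n.
  rewrite !xat_take; try lia.
  have := t_closed i i' i_gt0 i'_gt0; lia.
by rewrite mem_words12 size_drop t_size tail12 eqxx -weight_split addKn /=.
Qed.

Lemma level_seqs_uniq m K : uniq (level_seqs m K).
Proof.
apply: (@allpairs_cat_uniq _ _ _ (2 * K).-1); last by move=> x; apply: words12_uniq.
  by rewrite filter_uniq // allseq_uniq.
by move=> x; rewrite mem_filter mem_allseq => /andP[_ /andP[/eqP]].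
Qed.

Lemma size_level_seqs m K :
  size (level_seqs m K) = \sum_(x <- Ynat K) 'C(m - 2 * K, K - weight x).
Proof.
rewrite size_allpairs_dep sumnE big_map; apply: eq_bigr => x _; rewrite size_words12.
(* For K = 0 the tail has length m - 1 rather than m - 2K, but then only 'C(_, 0) occurs. *)
by case: K => [|K]; [rewrite !sub0n !bin0 | congr binomial; lia].
Qed.

Lemma gaps_enumeration m K : 0 < m -> 3 * K <= m ->
  exists s : seq {fset nat},
    [/\ uniq s,
        forall G : {fset nat}, G \in s <->
          [/\ is_ns_gaps G, genus G = m.-1 + K & multiplicity_is G m] &
        size s = \sum_(x <- Ynat K) 'C(m - 2 * K, K - weight x)].
Proof.
move=> m_gt0 m_ge3K; have le_2K_m : 2 * K <= m by lia.
exists (map (gaps_of m) (level_seqs m K)); split.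
- rewrite map_inj_in_uniq ?level_seqs_uniq // => t1 t2.
  move=> /(mem_level_seqs _ le_2K_m)[t1_lev _ _ _] /(mem_level_seqs _ le_2K_m)[t2_lev _ _ _].
  exact: gaps_of_inj.
- move=> G; split.
    case/mapP => t /(mem_level_seqs _ le_2K_m)[t_lev t_closed t_weight _] ->.
    split; [exact: gaps_of_ns | | exact: gaps_of_mult].
    by rewrite /genus (card_gaps_of m_gt0 t_lev) t_weight.
  case=> G_ns G_card G_mult; apply/mapP; exists (levels m G).
    apply/(mem_level_seqs _ le_2K_m); split.
    + exact: levels_level_seq.
    + exact: (levels_closed m_gt0 G_ns G_card G_mult m_ge3K).
    + exact: (weight_levels m_gt0 G_ns G_card G_mult m_ge3K).
    + exact: (levels_tail12 m_gt0 G_ns G_card G_mult m_ge3K).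
  by rewrite (gaps_of_levels m_gt0 G_ns G_card G_mult m_ge3K).
- by rewrite size_map size_level_seqs.
Qed.

Theorem theorem8p9 (k : int) (hk : (-1 <= k)%R) (g : nat)
    (hg : (4 * k + 3 <= g%:Z)%R) :
  exists s : seq {fset nat},
    [/\ uniq s,
        (forall G : {fset nat},
           G \in s <-> [/\ is_ns_gaps G, genus G = g
                         & multiplicity_is G (absz (g%:Z - k)%R)]) &
        size s =
          (\sum_(x <- Y k)
             'C(absz (g%:Z - 3 * k - 2)%R,
                absz (k + 1 - (a_of x)%:Z - 2 * (b_of x)%:Z)%R))%N].
Proof.
have [K k_eq] : exists K : nat, k = (K%:Z - 1)%R by exists (absz (k + 1)%R); lia.
subst k; have m_gt0 : 0 < g + 1 - K by lia.
have m_ge3K : 3 * K <= g + 1 - K by lia.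
have [s [s_uniq s_mem s_size]] := gaps_enumeration m_gt0 m_ge3K.
have genus_eq : (g + 1 - K).-1 + K = g by lia.
have mult_eq : absz (g%:Z - (K%:Z - 1))%R = g + 1 - K by lia.
exists s; split => // [G | ]; first by rewrite s_mem genus_eq mult_eq.
rewrite s_size Y_Ynat; apply: eq_big_seq => x.
rewrite mem_filter => /andP[/andP[_ x_weight] _].
by congr binomial; move: x_weight; rewrite /weight; lia.
Qed.
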